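(* Let $V$ be a finite-dimensional real vector space with a Lorentzian inner product $g$, and let $V=E_1\oplus\cdots\oplus E_r$ ($r\ge1$) be a $g$-orthogonal direct sum of subspaces on each of which $g$ is non-degenerate, with $E_r$ Lorentzian. For $1\le\beta\le r$ let $g_\beta(X,Y)=g(X_\beta,Y_\beta)$, where $X_\beta,Y_\beta$ are the $E_\beta$-components. Let $p\in E_r$ be a non-zero light-like vector and $\theta=g(p,\cdot)$. Let $\bar g_1=g,\bar g_2,\dots,\bar g_{r+1}$ be linearly independent symmetric bilinear forms on $V$ with $$\bar g_\alpha=\sum_{\beta=1}^r C_{\beta\alpha}g_\beta+C_{r+1\,\alpha}\,\theta\otimes\theta,$$ and assume $C_{r\alpha}=0$ and $C_{r+1\,\alpha}\neq0$ for all $2\le\alpha\le r+1$. Let $W=\bigcap_{\alpha=2}^{r+1}\ker\bar g_\alpha$. Then $$W=\{X\in E_r\mid\theta(X)=0\},\qquad W^{\perp_g}=E_1\oplus\cdots\oplus E_{r-1}\oplus\mathbb{R}p.$$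
   Context: For a symmetric bilinear form $b$ on $V$, $\ker b=\{X\in V\mid b(X,Y)=0\ \forall Y\in V\}$; $W^{\perp_g}$ is the $g$-orthogonal complement of $W$ in $V$. *)

From HB Require Import structures.
From mathcomp Require Import all_boot all_order all_algebra.
From mathcomp Require Import reals.
Set Implicit Arguments. Unset Strict Implicit. Unset Printing Implicit Defensive.
Import Order.TTheory GRing.Theory Num.Theory.
Local Open Scope ring_scope.

Section Defs.
Variables (R : realType) (V : vectType R).

Definition symbilinear (b : V -> V -> R) : Prop :=
  (forall (a : R) (x y z : V), b (a *: x + y) z = a * b x z + b y z) /\
  (forall x y : V, b x y = b y x).

Definition nondeg_on (b : V -> V -> R) (E : {vspace V}) : Prop :=
  forall x, x \in E -> (forall y, y \in E -> b x y = 0) -> x = 0.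

Definition negdef_on (b : V -> V -> R) (U : {vspace V}) : Prop :=
  forall x, x \in U -> x != 0 -> b x x < 0.

Definition lorentzian_on (b : V -> V -> R) (E : {vspace V}) : Prop :=
  [/\ nondeg_on b E,
      exists U : {vspace V}, [/\ (U <= E)%VS, \dim U = 1%N & negdef_on b U]
    & forall U : {vspace V}, (U <= E)%VS -> negdef_on b U -> (\dim U <= 1)%N].

Definition comp (n : nat) (E : 'I_n -> {vspace V}) (i : 'I_n) (x : V) : V :=
  sumv_pi (\sum_(j < n) E j)%VS i x.

Definition gcomp (g : V -> V -> R) (n : nat) (E : 'I_n -> {vspace V})
  (i : 'I_n) (x y : V) : R := g (comp E i x) (comp E i y).

Definition kerb (b : V -> V -> R) (x : V) : Prop := forall y, b x y = 0.

Definition orthc (g : V -> V -> R) (S : V -> Prop) (y : V) : Prop :=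
  forall x, S x -> g x y = 0.

Definition forms_lin_indep (m : nat) (b : 'I_m -> V -> V -> R) : Prop :=
  forall c : 'I_m -> R,
    (forall x y, \sum_(a < m) c a * b a x y = 0) -> forall a, c a = 0.

End Defs.

Definition wd (n : nat) (i : 'I_n) : 'I_n.+1 := widen_ord (leqnSn n) i.

From Pilot Require Import Defs.
From HB Require Import structures.
From mathcomp Require Import all_boot all_order all_algebra.
From mathcomp Require Import reals.
From Stdlib Require Import Classical.
Import Order.TTheory GRing.Theory Num.Theory.
Local Open Scope ring_scope.

(* For alpha >= 2 the forms gbar_alpha only see the components X_beta with
   beta < r and theta(X).  Each row beta < r of C restricted to alpha >= 2 is
   non-zero: otherwise the r independent forms gbar_2, ..., gbar_(r+1) would
   lie in the span of the r - 1 forms g_gamma (gamma < r, gamma <> beta) and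
   theta (x) theta.  Hence a vector of W has X_beta = 0 for beta < r by
   non-degeneracy of g on E_beta, and theta(X) = 0 since C_(r+1,alpha) <> 0.
   Conversely the description of W makes its g-orthogonal transparent: W is
   the theta-kernel inside E_r, whose orthogonal in E_r is the line Rp, again
   by non-degeneracy. *)

Section SymBilinear.
Context {R : realType} {V : vectType R} {g : V -> V -> R}.
Hypothesis hg : symbilinear g.

Lemma bilC x y : g x y = g y x.
Proof. by case: hg. Qed.

Lemma bilZDl a x y z : g (a *: x + y) z = a * g x z + g y z.
Proof. by case: hg. Qed.

Lemma bilDl x y z : g (x + y) z = g x z + g y z.
Proof. by rewrite -[x]scale1r bilZDl mul1r scale1r. Qed.

Lemma bil0l z : g 0 z = 0.
Proof. by have := bilDl 0 0 z; rewrite addr0 => /(canLR (addrK _)); rewrite subrr. Qed.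

Lemma bilZl a x z : g (a *: x) z = a * g x z.
Proof. by rewrite -[a *: x]addr0 bilZDl bil0l addr0. Qed.

Lemma bilBl x y z : g (x - y) z = g x z - g y z.
Proof. by rewrite bilDl -scaleN1r bilZl mulN1r. Qed.

Lemma bil0r z : g z 0 = 0.
Proof. by rewrite bilC bil0l. Qed.

Lemma bilDr x y z : g z (x + y) = g z x + g z y.
Proof. by rewrite !(bilC z) bilDl. Qed.

Lemma bilZr a x z : g z (a *: x) = a * g z x.
Proof. by rewrite !(bilC z) bilZl. Qed.

Lemma bilBr x y z : g z (x - y) = g z x - g z y.
Proof. by rewrite !(bilC z) bilBl. Qed.

Lemma bil_sumr (I : Type) (r : seq I) (P : pred I) (F : I -> V) z :
  g z (\sum_(i <- r | P i) F i) = \sum_(i <- r | P i) g z (F i).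
Proof. exact: (big_morph (g z) (fun x y => bilDr x y z) (bil0r z)). Qed.

Lemma nondeg_dual_vector {E : {vspace V}} {p : V} :
  nondeg_on g E -> p \in E -> p != 0 -> exists2 q, q \in E & g p q = 1.
Proof.
move=> hnd pE pnz.
have [q0 q0E gpq0] : exists2 q0, q0 \in E & g p q0 != 0.
  apply: NNPP => hn; apply/(negP pnz)/eqP/(hnd p pE) => y yE.
  by apply/eqP/negP => /negP gpy; apply: hn; exists y.
by exists ((g p q0)^-1 *: q0); rewrite ?memvZ // bilZr mulVf.
Qed.

End SymBilinear.

Section DirectSum.
Context {R : realType} {V : vectType R} {n : nat} {E : 'I_n -> {vspace V}}.
Hypotheses (sumE : (\sum_(i < n) E i)%VS = fullv)
  (dirE : directv (\sum_(i < n) E i)).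

Lemma memv_comp i x : Defs.comp E i x \in E i.
Proof. exact: memv_sum_pi. Qed.

Lemma comp_sum x : \sum_(i < n) Defs.comp E i x = x.
Proof. by apply: sumv_pi_sum; rewrite sumE memvf. Qed.

Lemma comp_bigD1 j x : x = Defs.comp E j x + \sum_(i < n | i != j) Defs.comp E i x.
Proof. by rewrite -{1}(comp_sum x) (bigD1 j). Qed.

Lemma comp_memv j x i :
  x \in E j -> Defs.comp E i x = if i == j then x else 0.
Proof.
move: dirE => /directv_sum_independent indepE xE.
pose u i := Defs.comp E i x - (if i == j then x else 0).
suff /eqP : u i = 0 by rewrite subr_eq0 => /eqP.
apply: (indepE u) => // [l _|].
  by rewrite memvB ?memv_comp //; case: eqP => [->|_]; rewrite ?mem0v.
by rewrite sumrB comp_sum -big_mkcond big_pred1_eq subrr.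
Qed.

Lemma memv_comp_only j x :
  (forall i, i != j -> Defs.comp E i x = 0) -> x \in E j.
Proof.
by move=> x_j; rewrite (comp_bigD1 j x) big1 // addr0 memv_comp.
Qed.

Context {g : V -> V -> R}.
Hypotheses (hg : symbilinear g)
  (orthE : forall i j, i != j -> forall x y, x \in E i -> y \in E j -> g x y = 0).

Lemma bil_compr j x y : x \in E j -> g x y = g x (Defs.comp E j y).
Proof.
move=> xE; rewrite {1}(comp_bigD1 j y) bilDr // bil_sumr // big1 ?addr0 //.
by move=> i ij; rewrite (orthE j i _ _ _ xE (memv_comp i y)) // eq_sym.
Qed.

Lemma gcomp_meml j i x y :
  x \in E j -> gcomp g E i x y = if i == j then g x (Defs.comp E i y) else 0.
Proof.
by move=> xE; rewrite /gcomp (comp_memv j x i xE); case: eqP; rewrite ?bil0l.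
Qed.

Lemma gcomp_memr j i x y :
  y \in E j -> gcomp g E i x y = if i == j then g (Defs.comp E i x) y else 0.
Proof.
by move=> yE; rewrite /gcomp (comp_memv j y i yE); case: eqP; rewrite ?bil0r.
Qed.

End DirectSum.

Arguments bil_compr {R V n E} sumE {g} hg orthE {j x y}.
Arguments gcomp_meml {R V n E} sumE dirE {g} hg {j} i {x y}.
Arguments gcomp_memr {R V n E} sumE dirE {g} hg {j} i {x y}.

Lemma forms_lin_indep_det {R : realType} {V : vectType R} {m : nat}
    (b h : 'I_m -> V -> V -> R) (N : 'M[R]_m) :
  forms_lin_indep b -> (forall a x y, b a x y = \sum_j N a j * h j x y) ->
  \det N != 0.
Proof.
move=> indep_b b_def; apply/negP => /det0P [v vnz vN].
apply/(negP vnz)/eqP/rowP => a; rewrite mxE.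
apply: (indep_b (fun a => v 0 a)) => x y.
under eq_bigr do rewrite b_def mulr_sumr.
rewrite exchange_big big1 // => j _; under eq_bigr do rewrite mulrA.
rewrite -mulr_suml; suff -> : \sum_i v 0 i * N i j = 0 by rewrite mul0r.
by have /matrixP/(_ 0 j) := vN; rewrite !mxE.
Qed.

Lemma forms_lin_indep_lift0 {R : realType} {V : vectType R} {m : nat}
    (b : 'I_m.+1 -> V -> V -> R) :
  forms_lin_indep b -> forms_lin_indep (fun a => b (lift ord0 a)).
Proof.
move=> indep_b c hc a.
have := indep_b (fun a => oapp c 0 (unlift ord0 a)) _ (lift ord0 a).
rewrite liftK; apply=> x y; rewrite big_ord_recl unlift_none mul0r add0r.
by under eq_bigr do rewrite liftK; exact: hc.
Qed.

Section LightlikeKernel.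
Context {R : realType} {V : vectType R} {g : V -> V -> R} {k : nat}
  {E : 'I_k.+1 -> {vspace V}} {p : V}
  {gbar : 'I_k.+2 -> V -> V -> R} {C : 'I_k.+2 -> 'I_k.+2 -> R}.
Hypotheses (hg : symbilinear g) (sumE : (\sum_(i < k.+1) E i)%VS = fullv)
  (dirE : directv (\sum_(i < k.+1) E i))
  (orthE : forall i j, i != j -> forall x y, x \in E i -> y \in E j -> g x y = 0)
  (nondegE : forall i, nondeg_on g (E i))
  (pE : p \in E ord_max) (pnz : p != 0)
  (indep_gbar : forms_lin_indep gbar)
  (gbar_def : forall a x y, gbar a x y =
     \sum_(b < k.+1) C (wd b) a * gcomp g E b x y
     + C ord_max a * (g p x * g p y))
  (C_r : forall a, a != ord0 -> C (wd ord_max) a = 0)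
  (C_theta : forall a, a != ord0 -> C ord_max a != 0).

Lemma gbar_meml_max a x y : a != ord0 -> x \in E ord_max ->
  gbar a x y = C ord_max a * (g p x * g p y).
Proof.
move=> a0 xE; rewrite gbar_def big1 ?add0r // => b _.
rewrite (gcomp_meml sumE dirE hg b xE).
by case: eqP => [->|_]; rewrite ?C_r ?mul0r ?mulr0.
Qed.

Lemma gbar_memr a b x y : b != ord_max -> y \in E b ->
  gbar a x y = C (wd b) a * g (Defs.comp E b x) y.
Proof.
move=> bmax yE.
have py : g p y = 0 by rewrite (orthE ord_max b _ _ _ pE yE) // eq_sym.
rewrite gbar_def (bigD1 b) //= big1 => [|i ib].
  by rewrite (gcomp_memr sumE dirE hg b yE) eqxx py !mulr0 !addr0.
by rewrite (gcomp_memr sumE dirE hg i yE) (negPf ib) mulr0.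
Qed.

Lemma coef_row_neq0 b : b != ord_max -> exists2 a, a != ord0 & C (wd b) a != 0.
Proof.
move=> bmax; apply: NNPP => row0.
have C_b a : a != ord0 -> C (wd b) a = 0.
  by move=> a0; apply: NNPP => Cb; apply: row0; exists a; last exact/eqP.
(* N expresses gbar_2, ..., gbar_(r+1) in the r forms g_gamma (gamma < r) and
   theta (x) theta; g_r does not occur since C_(r,alpha) = 0. *)
pose col (j : 'I_k.+1) : 'I_k.+2 := if j == ord_max then ord_max else wd j.
pose h (j : 'I_k.+1) x y :=
  if j == ord_max then g p x * g p y else gcomp g E j x y.
pose N : 'M[R]_k.+1 := \matrix_(a, j) C (col j) (lift ord0 a).
have : \det N != 0.
  apply: (forms_lin_indep_det (fun a => gbar (lift ord0 a)) h).
    exact: forms_lin_indep_lift0.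
  move=> a x y; rewrite gbar_def (bigD1 ord_max) //= C_r 1?eq_sym ?neq_lift //.
  rewrite mul0r add0r addrC [RHS](bigD1 ord_max) //= !mxE /col /h eqxx.
  by congr (_ + _); apply: eq_bigr => j /negPf jmax; rewrite !mxE /col jmax.
rewrite (expand_det_col N b) big1 ?eqxx // => a _.
by rewrite mxE /col (negPf bmax) C_b ?mul0r // eq_sym neq_lift.
Qed.

Lemma ker_gbar_iff X :
  (forall a, a != ord0 -> kerb (gbar a) X) <-> X \in E ord_max /\ g p X = 0.
Proof.
split=> [kerX | [XE pX] a a0 y]; last by rewrite gbar_meml_max // pX mul0r mulr0.
have XE : X \in E ord_max.
  apply: (memv_comp_only sumE) => b bmax.
  have [a a0 Cb] := coef_row_neq0 b bmax.
  apply: (nondegE b _ (memv_comp b X)) => y yE.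
  have /eqP := kerX a a0 y; rewrite (gbar_memr a b X y bmax yE).
  by rewrite mulf_eq0 (negPf Cb) => /eqP.
split=> //; have [q qE pq] := nondeg_dual_vector hg (nondegE ord_max) pE pnz.
have /eqP := kerX ord_max isT q.
rewrite gbar_meml_max // pq mulr1 mulf_eq0 (negPf (C_theta ord_max isT)).
by rewrite bilC // => /eqP.
Qed.

Lemma orthc_ker_gbar_iff Y :
  orthc g (fun X => forall a, a != ord0 -> kerb (gbar a) X) Y <->
  Y \in (\sum_(i < k.+1 | i != ord_max) E i + <[p]>)%VS.
Proof.
split=> [orthY | ]; last first.
  move=> /memv_addP [u /memv_sumP [us usE ->] [v /vlineP [c ->] ->]] X.
  move=> /ker_gbar_iff [XE pX]; rewrite bilDr // bilZr // (bilC hg X p) pX mulr0.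
  rewrite bil_sumr // big1 ?addr0 // => i imax.
  by rewrite (orthE ord_max i _ _ _ XE (usE i imax)) // eq_sym.
have [q qE pq] := nondeg_dual_vector hg (nondegE ord_max) pE pnz.
set Yr := Defs.comp E ord_max Y; set c := g q Yr.
(* x - theta(x) q lies in W for x in E_r, where theta(q) = 1. *)
have Yr_eq : Yr - c *: p = 0.
  apply: (nondegE ord_max); first by rewrite memvB ?memvZ ?memv_comp.
  move=> x xE; pose x' := x - g p x *: q.
  have x'E : x' \in E ord_max by rewrite memvB ?memvZ.
  have px' : g p x' = 0 by rewrite /x' bilBr // bilZr // pq mulr1 subrr.
  have /eqP := orthY x' (proj2 (ker_gbar_iff x') (conj x'E px')).
  rewrite (bil_compr sumE hg orthE x'E) -/Yr bilBl // bilZl // subr_eq0.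
  by move=> /eqP Yrx; rewrite bilBl // bilZl // (bilC hg Yr) Yrx mulrC subrr.
rewrite (comp_bigD1 sumE ord_max Y) -/Yr addrC.
move/eqP: Yr_eq; rewrite subr_eq0 => /eqP ->.
by rewrite memv_add ?memvZ ?memv_line // memv_sumr // => i _; exact: memv_comp.
Qed.

End LightlikeKernel.

Theorem lemma2 (R : realType) (V : vectType R) (g : V -> V -> R) (k : nat)
  (E : 'I_k.+1 -> {vspace V}) (p : V)
  (gbar : 'I_k.+2 -> V -> V -> R) (C : 'I_k.+2 -> 'I_k.+2 -> R) :
  symbilinear g -> lorentzian_on g fullv ->
  (\sum_(i < k.+1) E i)%VS = fullv -> directv (\sum_(i < k.+1) E i) ->
  (forall i j, i != j -> forall x y, x \in E i -> y \in E j -> g x y = 0) ->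
  (forall i, nondeg_on g (E i)) -> lorentzian_on g (E ord_max) ->
  p \in E ord_max -> p != 0 -> g p p = 0 ->
  (forall a, symbilinear (gbar a)) -> gbar ord0 = g ->
  forms_lin_indep gbar ->
  (forall a x y, gbar a x y =
     \sum_(b < k.+1) C (wd b) a * gcomp g E b x y
     + C ord_max a * (g p x * g p y)) ->
  (forall a, a != ord0 -> C (wd ord_max) a = 0 /\ C ord_max a != 0) ->
  let W := fun X => forall a : 'I_k.+2, a != ord0 -> kerb (gbar a) X in
  (forall X, W X <-> (X \in E ord_max /\ g p X = 0)) /\
  (forall Y, orthc g W Y <->
     Y \in (\sum_(i < k.+1 | i != ord_max) E i + <[p]>)%VS).
Proof.
move=> hg _ sumE dirE orthE nondegE _ pE pnz _ _ _ indep gbar_def hC W.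
have C_r a (a0 : a != ord0) := (hC a a0).1.
have C_theta a (a0 : a != ord0) := (hC a a0).2.
split=> [X | Y].
  exact: (ker_gbar_iff hg sumE dirE orthE nondegE pE pnz indep gbar_def
    C_r C_theta X).
exact: (orthc_ker_gbar_iff hg sumE dirE orthE nondegE pE pnz indep gbar_def
  C_r C_theta Y).
Qed.
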